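(* Let $m,n\ge1$ and let $\lambda\subseteq\nu\subseteq(n-1)^{m-1}$ be partitions. Then the polytope $\mathrm{PASM}(\nu/\lambda,m,n)$ is integrally equivalent to the order polytope $\mathcal{O}(P(\nu/\lambda))$.
   Context: A partition $\mu=(\mu_1\ge\mu_2\ge\cdots)$ is a weakly decreasing sequence of nonnegative integers with finitely many nonzero terms, identified with the set of positions $\{(i,j):i\ge1,1\le j\le\mu_i\}$; $\mu\subseteq\nu$ means $\mu_i\le\nu_i$ for all $i$, and $\mu\subseteq a^b$ means $\mu$ has at most $b$ positive parts and $\mu_1\le a$. For $\mu\subseteq(n-1)^{m-1}$, the $m\times n$ matrix $M^\mu$ has entries $M^\mu_{1,\mu_1+1}=1$; for each $1\le k\le m-1$ with $\mu_k>\mu_{k+1}$, $M^\mu_{k+1,\mu_{k+1}+1}=1$ and $M^\mu_{k+1,\mu_k+1}=-1$; all other entries $0$. $\mathrm{PASM}(\nu/\lambda,m,n)$ is the convex hull in $\mathbb{R}^{mn}$ of $\{M^\mu:\lambda\subseteq\mu\subseteq\nu\}$. $P(\nu/\lambda)$ is the poset whose elements are the positions $(i,j)$ in $\nu$ but not in $\lambda$, with $(i,j)\le(i',j')$ iff $i\le i'$ and $j\le j'$. For a finite poset $P$, $\mathcal{O}(P)\subseteq\mathbb{R}^P$ is the set of $f:P\to\mathbb{R}$ with $0\le f(p)\le 1$ for all $p$ and $f(p)\le f(q)$ whenever $p\le q$. Integer polytopes $\mathcal{P}\subset\mathbb{R}^d$, $\mathcal{Q}\subset\mathbb{R}^r$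 are integrally equivalent if there is an affine map $f:\mathbb{R}^d\to\mathbb{R}^r$ mapping $\mathcal{P}$ bijectively onto $\mathcal{Q}$ and $\mathbb{Z}^d\cap\mathrm{aff}(\mathcal{P})$ bijectively onto $\mathbb{Z}^r\cap\mathrm{aff}(\mathcal{Q})$, where $\mathrm{aff}$ is affine span. *)

From mathcomp Require Import all_boot all_order all_algebra.
From mathcomp Require Import reals.
Set Implicit Arguments. Unset Strict Implicit. Unset Printing Implicit Defensive.
Import Order.TTheory GRing.Theory Num.Theory.
Local Open Scope ring_scope.

Section Defs.
Variable R : realType.

Definition conv {I : finType} (S : (I -> R) -> Prop) : (I -> R) -> Prop :=
  fun x => exists (k : nat) (p : 'I_k -> I -> R) (w : 'I_k -> R),
    (forall t, S (p t)) /\ (forall t, 0 <= w t) /\ (\sum_(t < k) w t = 1) /\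
    (forall i, x i = \sum_(t < k) w t * p t i).

Definition aff {I : finType} (S : (I -> R) -> Prop) : (I -> R) -> Prop :=
  fun x => exists (k : nat) (p : 'I_k -> I -> R) (w : 'I_k -> R),
    (forall t, S (p t)) /\ (\sum_(t < k) w t = 1) /\
    (forall i, x i = \sum_(t < k) w t * p t i).

Definition is_affine {I J : finType} (f : (I -> R) -> (J -> R)) : Prop :=
  exists (A : J -> I -> R) (b : J -> R),
    forall x j, f x j = b j + \sum_(i : I) A j i * x i.

Definition integral_pt {I : finType} (x : I -> R) : Prop :=
  forall i, x i \is a Num.int.

Definition bij_onto {X Y : Type} (f : X -> Y) (A : X -> Prop) (B : Y -> Prop) :=
  [/\ (forall x, A x -> B (f x)),
      (forall x y, A x -> A y -> f x = f y -> x = y) &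
      (forall y, B y -> exists x, A x /\ f x = y)].

Definition integrally_equivalent {I J : finType}
    (P : (I -> R) -> Prop) (Q : (J -> R) -> Prop) : Prop :=
  exists f : (I -> R) -> (J -> R),
    [/\ is_affine f, bij_onto f P Q &
        bij_onto f (fun x => integral_pt x /\ aff P x)
                   (fun y => integral_pt y /\ aff Q y)].

Definition order_polytope {T : finType} (le : rel T) : (T -> R) -> Prop :=
  fun f => (forall p, 0 <= f p <= 1) /\ (forall p q, le p q -> f p <= f q).

(* The matrix M^mu (0-indexed; mu i stands for mu_{i+1}) as a point of R^{m x n}. *)
Definition Mmu (m n : nat) (mu : nat -> nat) : 'I_m * 'I_n -> R :=
  fun rc => let r := val rc.1 in let c := val rc.2 in
    if r == 0%N then ((c == mu 0%N) : nat)%:R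
    else if (mu r < mu r.-1)%N then ((c == mu r) : nat)%:R - ((c == mu r.-1) : nat)%:R
    else 0.

End Defs.

(* Partitions as functions nat -> nat, 0-indexed: mu i = mu_{i+1}. *)
Definition is_partition (mu : nat -> nat) : Prop :=
  (forall i, mu i.+1 <= mu i)%N /\ exists N, forall i, (N <= i)%N -> mu i = 0%N.

Definition subpart (mu nu : nat -> nat) : Prop := forall i, (mu i <= nu i)%N.

(* mu ⊆ a^b : at most b positive parts and mu_1 <= a *)
Definition in_box (a b : nat) (mu : nat -> nat) : Prop :=
  (forall i, (mu i <= a)%N) /\ (forall i, (b <= i)%N -> mu i = 0%N).

Definition PASM (R : realType) (m n : nat) (lam nu : nat -> nat)
  : ('I_m * 'I_n -> R) -> Prop :=
  conv (fun x => exists mu, [/\ is_partition mu, subpart lam mu,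
                               subpart mu nu & x = @Mmu R m n mu]).

(* Cells of nu/lam (0-indexed (i,j) stands for position (i+1,j+1));
   when nu ⊆ (n-1)^(m-1) all cells of nu lie in 'I_m * 'I_n. *)
Definition skew_cell (m n : nat) (lam nu : nat -> nat) (c : 'I_m * 'I_n) : bool :=
  (lam c.1 <= c.2 < nu c.1)%N.

Definition skew_poset (m n : nat) (lam nu : nat -> nat) : finType :=
  {c : 'I_m * 'I_n | skew_cell lam nu c}.

Definition skew_le (m n : nat) (lam nu : nat -> nat) : rel (skew_poset m n lam nu) :=
  fun p q => ((val p).1 <= (val q).1)%N && ((val p).2 <= (val q).2)%N.

(* The partial corner sums x |-> (c |-> sum of x_(r,s) over (r,s) <= c) form an
   integral linear map sending M^mu to the indicator of the cells of nu/lam that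
   lie outside mu; these indicators are exactly the indicators of the up-sets of
   P(nu/lam), each up-set coming from the partition mu obtained by adding to lam
   the cells not in the up-set.  Every point of an order polytope is a convex
   combination of indicators of up-sets, so the map sends PASM(nu/lam,m,n) onto
   O(P(nu/lam)).  On the affine span it is inverted by taking mixed second
   differences of the corner sums, extended outside nu/lam by the values of
   [lam_i <= j] that every M^mu produces there; this inverse is integral too,
   so the lattice points of the two affine spans correspond as well. *)

From mathcomp Require Import all_boot all_order all_algebra.
From mathcomp Require Import reals boolp zify.
Set Implicit Arguments. Unset Strict Implicit. Unset Printing Implicit Defensive.
Import Order.TTheory GRing.Theory Num.Theory.
Local Open Scope ring_scope.

Lemma find_iota_leq (b : pred nat) N k :
  (forall j j', (j <= j')%N -> b j -> b j') -> (k < N)%N -> b k ->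
  forall j, (find b (iota 0 N) <= j)%N = b j.
Proof.
move=> b_mono ltkN bk j.
have has_b : has b (iota 0 N) by apply/hasP; exists k; rewrite // mem_iota.
have lt_find : (find b (iota 0 N) < N)%N.
  by rewrite -[N in (_ < N)%N](size_iota 0) -has_find.
have b_find : b (find b (iota 0 N)) by have := nth_find 0 has_b; rewrite nth_iota.
apply/idP/idP => [le_j|bj]; first exact: b_mono le_j b_find.
rewrite leqNgt; apply/negP => lt_j.
by have := before_find 0 lt_j; rewrite nth_iota ?bj //; apply: ltn_trans lt_find.
Qed.

Section AffineCombinations.
Variable R : realType.

Definition comb {I : finType} k (w : 'I_k -> R) (p : 'I_k -> I -> R) : I -> R :=
  fun i => \sum_(t < k) w t * p t i.

Definition affine_morph {I J : finType} (f : (I -> R) -> (J -> R)) : Prop :=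
  forall k (w : 'I_k -> R) p, \sum_(t < k) w t = 1 ->
    f (comb w p) = comb w (fun t => f (p t)).

Definition convex_set {I : finType} (Q : (I -> R) -> Prop) : Prop :=
  forall x, conv Q x -> Q x.

Variables I J : finType.
Implicit Types (S : (I -> R) -> Prop) (Q : (J -> R) -> Prop).

Lemma is_affine_morph (f : (I -> R) -> (J -> R)) : is_affine f -> affine_morph f.
Proof.
move=> [A [b fE]] k w p sum_w; apply: funext => j; rewrite /comb fE.
under [RHS]eq_bigr do rewrite fE mulrDr mulr_sumr.
rewrite big_split /= -mulr_suml sum_w mul1r exchange_big /=; congr (_ + _).
by apply: eq_bigr => i _; rewrite mulr_sumr; apply: eq_bigr => t _; rewrite mulrCA.
Qed.

Lemma conv_aff S x : conv S x -> aff S x.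
Proof. by move=> [k [p [w [Sp [_ wE]]]]]; exists k, p, w. Qed.

Lemma conv_pt S x : S x -> conv S x.
Proof.
move=> Sx; exists 1%N, (fun=> x), (fun=> 1).
by rewrite big_ord1; do 3!split=> // *; rewrite big_ord1 mul1r.
Qed.

Lemma aff_pt S x : S x -> aff S x.
Proof. by move/conv_pt/conv_aff. Qed.

Lemma conv_sub S S' x : (forall s, S s -> S' s) -> conv S x -> conv S' x.
Proof. by move=> SS' [k [p [w [Sp wE]]]]; exists k, p, w; split=> // t; apply: SS'. Qed.

Lemma conv_comb S v x a : S v -> conv S x -> 0 <= a <= 1 ->
  conv S (fun i => a * v i + (1 - a) * x i).
Proof.
move=> Sv [k [p [w [Sp [w_ge0 [sum_w xE]]]]]] /andP[a_ge0 a_le1].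
exists k.+1, (fun t => if unlift ord0 t is Some t' then p t' else v),
  (fun t => if unlift ord0 t is Some t' then (1 - a) * w t' else a).
split; first by move=> t; case: unliftP.
split; first by move=> t; case: unliftP => *; rewrite ?mulr_ge0 ?subr_ge0.
split=> [|i]; rewrite big_ord_recl unlift_none; under eq_bigr do rewrite liftK.
  by rewrite -mulr_sumr sum_w mulr1 addrC subrK.
by rewrite xE mulr_sumr; congr (_ + _); apply: eq_bigr => t _; rewrite mulrA.
Qed.

Lemma aff_fixed (H : (I -> R) -> (I -> R)) S x :
  affine_morph H -> (forall s, S s -> H s = s) -> aff S x -> H x = x.
Proof.
move=> H_aff HS [k [p [w [Sp [sum_w xE]]]]].
have -> : x = comb w p by apply: funext.
by rewrite H_aff //; apply: funext => i; apply: eq_bigr => t _; rewrite HS.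
Qed.

Section Image.
Variables (f : (I -> R) -> (J -> R)) (S : (I -> R) -> Prop) (Q : (J -> R) -> Prop).
Hypothesis f_aff : affine_morph f.

Lemma affine_morph_conv x : (forall s, S s -> Q (f s)) -> conv S x -> conv Q (f x).
Proof.
move=> fSQ [k [p [w [Sp [w_ge0 [sum_w xE]]]]]].
have -> : x = comb w p by apply: funext.
rewrite f_aff //; exists k, (fun t => f (p t)), w.
by split=> // t; apply: fSQ.
Qed.

Lemma affine_morph_aff x : (forall s, S s -> Q (f s)) -> aff S x -> aff Q (f x).
Proof.
move=> fSQ [k [p [w [Sp [sum_w xE]]]]].
have -> : x = comb w p by apply: funext.
rewrite f_aff //; exists k, (fun t => f (p t)), w.
by split=> // t; apply: fSQ.
Qed.

Hypothesis Q_sub_fS : forall y, Q y -> exists2 s, S s & f s = y.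

Lemma lift_points k (q : 'I_k -> J -> R) : (forall t, Q (q t)) ->
  exists p : 'I_k -> I -> R, forall t, S (p t) /\ f (p t) = q t.
Proof.
move=> Qq; have /choice[p pP] : forall t, exists x, S x /\ f x = q t.
  by move=> t; have [x Sx fx] := Q_sub_fS (Qq t); exists x.
by exists p.
Qed.

Lemma affine_morph_conv_onto y : conv Q y -> exists2 x, conv S x & f x = y.
Proof.
move=> [k [q [w [/lift_points[p pP] [w_ge0 [sum_w yE]]]]]].
exists (comb w p); first by exists k, p, w; split=> // t; case: (pP t).
rewrite f_aff //; apply: funext => j; rewrite yE.
by apply: eq_bigr => t _; case: (pP t) => _ ->.
Qed.

Lemma affine_morph_aff_onto y : aff Q y -> exists2 x, aff S x & f x = y.
Proof.
move=> [k [q [w [/lift_points[p pP] [sum_w yE]]]]].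
exists (comb w p); first by exists k, p, w; split=> // t; case: (pP t).
rewrite f_aff //; apply: funext => j; rewrite yE.
by apply: eq_bigr => t _; case: (pP t) => _ ->.
Qed.

End Image.

Lemma integrally_equivalent_conv
    (f : (I -> R) -> (J -> R)) (g : (J -> R) -> (I -> R)) S Q :
  is_affine f -> affine_morph g -> (forall s, S s -> g (f s) = s) ->
  (forall y, Q y <-> conv (fun z => exists2 s, S s & f s = z) y) ->
  (forall x, integral_pt x -> integral_pt (f x)) ->
  (forall y, integral_pt y -> integral_pt (g y)) ->
  integrally_equivalent (conv S) Q.
Proof.
move=> f_affine g_aff gfS QE f_int g_int.
have f_aff := is_affine_morph f_affine.
have gf_aff x : aff (conv S) x -> g (f x) = x.
  have gf_morph : affine_morph (fun x => g (f x)).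
    by move=> k w p sum_w; rewrite f_aff ?g_aff.
  by apply: (aff_fixed gf_morph) => s /conv_aff; apply: (aff_fixed gf_morph).
have f_inj x y : aff (conv S) x -> aff (conv S) y -> f x = f y -> x = y.
  by move=> Sx Sy fxy; rewrite -(gf_aff x Sx) -(gf_aff y Sy) fxy.
have conv_fS_Q x : conv S x -> Q (f x).
  by move=> /(affine_morph_conv f_aff (fun s Ss => ex_intro2 _ _ s Ss erefl)) /QE.
have Q_f_conv y : Q y -> exists2 x, conv S x & f x = y.
  by move/QE; apply: affine_morph_conv_onto.
exists f; split=> //; split.
- exact: conv_fS_Q.
- by move=> x y /aff_pt Sx /aff_pt Sy; apply: f_inj.
- by move=> y /Q_f_conv[x Sx fx]; exists x.
- by move=> x [x_int Sx]; split; [apply: f_int | apply: affine_morph_aff conv_fS_Q Sx].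
- by move=> x y [_ Sx] [_ Sy]; apply: f_inj.
- move=> y [y_int /(affine_morph_aff_onto f_aff Q_f_conv)[x Sx fx]].
  by exists x; split=> //; split=> //; rewrite -(gf_aff x Sx) fx; apply: g_int.
Qed.

End AffineCombinations.

Section OrderPolytope.
Variables (R : realType) (T : finType) (le : rel T).
Local Notation OP := (@order_polytope R T le).

Definition upward_closed (P : pred T) : Prop := forall p q, le p q -> P p -> P q.

Definition indicator (P : pred T) : T -> R := fun p => (P p)%:R.

Lemma order_polytope_indicator P : upward_closed P -> OP (indicator P).
Proof.
move=> P_up; split=> [p|p q le_pq]; rewrite /indicator /=.
  by case: (P p); rewrite ?lexx ?ler01.
by case: (boolP (P p)) => [/(P_up _ _ le_pq)->|_]; rewrite ?lexx ?ler0n.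
Qed.

Lemma order_polytope_convex : convex_set OP.
Proof.
move=> y [k [q [w [OPq [w_ge0 [sum_w yE]]]]]].
have q01 t p : 0 <= q t p <= 1 := (OPq t).1 p.
split=> [p|p p' le_pp']; rewrite !yE.
  rewrite sumr_ge0 => [|t _]; last by rewrite mulr_ge0 // (andP (q01 t p)).1.
  rewrite -sum_w ler_sum // => t _.
  by rewrite -[leRHS]mulr1 ler_wpM2l // (andP (q01 t p)).2.
by rewrite ler_sum // => t _; rewrite ler_wpM2l // (OPq t).2.
Qed.

Lemma order_polytope_upward_gt y c : OP y -> upward_closed [pred p | c < y p].
Proof. by move=> [_ y_mono] p q /y_mono le_y /lt_le_trans; apply. Qed.

Lemma order_polytope_upward_ge y c : OP y -> upward_closed [pred p | c <= y p].
Proof. by move=> [_ y_mono] p q /y_mono le_y /le_trans; apply. Qed.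

Lemma order_polytope_peel y (a : R) :
  OP y -> 0 < a < 1 -> (forall p, 0 < y p -> a <= y p) ->
  OP (fun p => if 0 < y p then (y p - a) / (1 - a) else 0).
Proof.
move=> [y01 y_mono] /andP[a_gt0 a_lt1] a_min.
have a1_gt0 : 0 < 1 - a by rewrite subr_gt0.
split=> [p|p p' le_pp'].
  case: ifP => [y_pos|_]; last by rewrite lexx ler01.
  have [_ yp_le1] := andP (y01 p).
  rewrite divr_ge0 ?subr_ge0 ?a_min ?(ltW a_lt1) //=.
  by rewrite ler_pdivrMr // mul1r lerB.
have le_y := y_mono _ _ le_pp'.
case: ifP => [y_pos|_]; last first.
  by case: ifP => // /a_min a_le; rewrite divr_ge0 ?subr_ge0 ?(ltW a_lt1).
by rewrite (lt_le_trans y_pos le_y) ler_pM2r ?invr_gt0 // lerB.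
Qed.

Definition fractional (y : T -> R) : pred T := [pred p | 0 < y p < 1].

Lemma order_polytope_01 y :
  OP y -> (forall p, ~~ fractional y p) -> y = indicator [pred p | 1 <= y p].
Proof.
move=> OPy y_int; apply: funext => p; have /andP[y_ge0 y_le1] := OPy.1 p.
rewrite /indicator /=; case: leP => [y_ge1|y_lt1]; apply/eqP; first by rewrite eq_le y_le1.
by rewrite eq_le y_ge0 andbT leNgt; have := y_int p; rewrite /fractional /= y_lt1 andbT.
Qed.

Lemma order_polytope_conv_indicators y :
  OP y -> conv (fun z => exists2 P, upward_closed P & z = indicator P) y.
Proof.
have [N] := ubnP #|fractional y|; elim: N y => // N IH y lt_N OPy.
have y_ge0 p : 0 <= y p by case/andP: (OPy.1 p).
case: (pickP (fractional y)) => [p0 /andP[y0_gt0 y0_lt1]|y_int]; last first.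
  apply: conv_pt; exists [pred p | 1 <= y p]; first exact: order_polytope_upward_ge.
  by apply: order_polytope_01 => // p; rewrite y_int.
(* Peel off a * [y > 0], with a the least positive value of y: the rescaled rest
   z has strictly fewer fractional values. *)
have [q q_pos q_min] := @arg_minP _ _ _ p0 (fun p => 0 < y p) y y0_gt0.
set a := y q; have a01 : 0 < a < 1 by rewrite q_pos (le_lt_trans (q_min _ y0_gt0)).
have a1_neq0 : 1 - a != 0 by rewrite subr_eq0 gt_eqF //; case/andP: a01.
set z := fun p => if 0 < y p then (y p - a) / (1 - a) else 0.
have OPz : OP z by apply: order_polytope_peel.
have lt_z : (#|fractional z| < N)%N.
  rewrite -ltnS; apply: leq_trans lt_N; apply/proper_card/properP; split.
    apply/subsetP => p; rewrite !inE /z; case: ifP => [y_pos|]; last by rewrite ltxx.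
    by move=> /andP[_]; rewrite ltr_pdivrMr ?subr_gt0 ?(andP a01).2 // mul1r ltrD2r.
  by exists q; rewrite !inE /z q_pos /a ?subrr ?mul0r ?ltxx // (andP a01).2.
have -> : y = fun p => a * indicator [pred p | 0 < y p] p + (1 - a) * z p.
  apply: funext => p; rewrite /indicator /z /=; case: ifP => [_|y_npos].
    by rewrite mulr1 mulrCA divff // mulr1 addrC subrK.
  by rewrite !mulr0 addr0; apply/eqP; rewrite eq_le y_ge0 leNgt y_npos.
apply: conv_comb; [|exact: IH|by case/andP: a01 => *; rewrite !ltW].
by exists [pred p | 0 < y p]; first exact: order_polytope_upward_gt.
Qed.
End OrderPolytope.

Arguments indicator {R T}.

Section MixedDifference.
Variable V : zmodType.
Implicit Types (U W : nat -> nat -> V).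

Definition shift0 U (i j : nat) : V :=
  match i, j with i'.+1, j'.+1 => U i' j' | _, _ => 0 end.

Definition col_diff W (r s : nat) : V := W r s.+1 - W r s.

Definition mixed_diff W (r s : nat) : V := col_diff W r.+1 s - col_diff W r s.

Lemma sum_mixed_diff W a b :
  \sum_(r < a) \sum_(s < b) mixed_diff W r s = (W a b - W a 0) - (W 0 b - W 0 0).
Proof.
have sum_col r : \sum_(s < b) col_diff W r s = W r b - W r 0.
  by rewrite -(big_mkord xpredT (col_diff W r)) telescope_sumr.
under eq_bigr do rewrite sumrB !sum_col.
by rewrite -(big_mkord xpredT (fun r => (W r.+1 b - W r.+1 0) - (W r b - W r 0))) telescope_sumr.
Qed.

End MixedDifference.

Lemma col_diff_shift0_leq (R : realType) (mu : nat -> nat) r s :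
  col_diff (shift0 (fun i j => ((mu i <= j)%N%:R : R))) r.+1 s = (s == mu r)%:R.
Proof.
rewrite /col_diff /=; case: s => [|s]; first by rewrite subr0 leqn0 eq_sym.
have [le_mu_s|lt_s_mu] := leqP (mu r) s.
  by rewrite (leqW le_mu_s) subrr gtn_eqF.
by rewrite subr0 leq_eqVlt ltnS leqNgt lt_s_mu orbF eq_sym.
Qed.

Lemma Mmu_mixed_diff (R : realType) m n (mu : nat -> nat) rs :
  (forall i, mu i.+1 <= mu i)%N ->
  @Mmu R m n mu rs = mixed_diff (shift0 (fun i j => (mu i <= j)%N%:R)) rs.1 rs.2.
Proof.
move=> mu_decr; case: rs => [[r lt_r] s]; rewrite /Mmu /mixed_diff col_diff_shift0_leq /=.
case: r lt_r => [|r] _ /=; first by rewrite /col_diff subrr subr0.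
rewrite col_diff_shift0_leq; case: ltnP => // le_mu.
have eq_mu : mu r.+1 = mu r by apply/anti_leq; rewrite mu_decr le_mu.
by rewrite eq_mu subrr.
Qed.

Lemma mixed_diff_comb (R : ringType) k (w : 'I_k -> R) (W : 'I_k -> nat -> nat -> R) r s :
  mixed_diff (fun i j => \sum_(t < k) w t * W t i j) r s =
  \sum_(t < k) w t * mixed_diff (W t) r s.
Proof. by rewrite /mixed_diff /col_diff -!sumrB; apply: eq_bigr => t _; rewrite !mulrBr. Qed.

Lemma partition_antitone mu i j : is_partition mu -> (i <= j)%N -> (mu j <= mu i)%N.
Proof.
move=> [mu_decr _]; apply: (@homo_leq _ mu (fun a b => b <= a)%N) => // x y z le_yx le_zy.
exact: leq_trans le_zy le_yx.
Qed.

Section SkewShape.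
Variables (R : realType) (m n : nat) (lam nu : nat -> nat).
Local Notation PT := (skew_poset m n lam nu).

Definition corner_sum (x : 'I_m * 'I_n -> R) (c : PT) : R :=
  \sum_(rs : 'I_m * 'I_n) ((rs.1 <= (val c).1) && (rs.2 <= (val c).2))%N%:R * x rs.

Lemma corner_sum_affine : is_affine corner_sum.
Proof.
exists (fun (c : PT) (rs : 'I_m * 'I_n) => ((rs.1 <= (val c).1) && (rs.2 <= (val c).2))%N%:R).
by exists (fun=> 0) => x c; rewrite add0r.
Qed.

Lemma corner_sum_int x : integral_pt x -> integral_pt (corner_sum x).
Proof. by move=> x_int c; apply: rpred_sum => rs _; rewrite rpredM ?natr_int. Qed.

Lemma corner_sum_mixed_diff U c :
  corner_sum (fun rs => mixed_diff (shift0 U) rs.1 rs.2) c = U (val c).1 (val c).2.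
Proof.
have <- : \sum_(r < (val c).1.+1) \sum_(s < (val c).2.+1) mixed_diff (shift0 U) r s =
    U (val c).1 (val c).2 by rewrite sum_mixed_diff /= !subr0.
rewrite (big_ord_widen m (fun r => \sum_(s < (val c).2.+1) mixed_diff (shift0 U) r s)) //.
rewrite big_mkcond /corner_sum (_ : \sum_rs _ = \sum_(r < m) \sum_(s < n)
    ((r <= (val c).1) && (s <= (val c).2))%N%:R * mixed_diff (shift0 U) r s); last first.
  by rewrite pair_bigA.
apply: eq_bigr => r _.
rewrite ltnS; case: leqP => _; last by rewrite big1 // => s _; rewrite mul0r.
rewrite [RHS](big_ord_widen n) // [RHS]big_mkcond /=; apply: eq_bigr => s _.
by rewrite ltnS; case: leqP; rewrite ?mul1r ?mul0r.
Qed.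

Lemma corner_sum_Mmu mu : (forall i, mu i.+1 <= mu i)%N ->
  corner_sum (@Mmu R m n mu) = indicator [pred c : PT | mu (val c).1 <= (val c).2]%N.
Proof.
move=> mu_decr; apply: funext => c.
have -> : @Mmu R m n mu = fun rs => mixed_diff (shift0 (fun i j => (mu i <= j)%N%:R)) rs.1 rs.2.
  by apply: funext => rs; apply: Mmu_mixed_diff.
exact: corner_sum_mixed_diff.
Qed.

End SkewShape.

Arguments corner_sum {R m n lam nu}.

Section Cells.
Variables (m n : nat) (lam nu : nat -> nat).
Local Notation PT := (skew_poset m n lam nu).
Hypothesis nu_box : in_box n.-1 m.-1 nu.

Definition cell_value {T : Type} (y : PT -> T) (d : nat -> nat -> T) (i j : nat) : T :=
  if [pick c : PT | ((val c).1 == i :> nat) && ((val c).2 == j :> nat)] is Some c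
  then y c else d i j.

Lemma cell_at i j : (lam i <= j < nu i)%N ->
  exists c : PT, (val c).1 = i :> nat /\ (val c).2 = j :> nat.
Proof.
move=> cell_ij; have /andP[_ lt_j] := cell_ij.
have lt_i : (i < m)%N.
  rewrite ltnNge; apply/negP => le_m.
  by move: lt_j; rewrite (nu_box.2 i (leq_trans (leq_pred m) le_m)).
have lt_jn : (j < n)%N by apply: leq_trans lt_j (leq_trans (nu_box.1 i) (leq_pred n)).
by exists (Sub (Ordinal lt_i, Ordinal lt_jn) cell_ij).
Qed.

Lemma cell_value_cell T y d (c : PT) : @cell_value T y d (val c).1 (val c).2 = y c.
Proof.
rewrite /cell_value; case: pickP => [c' /andP[/eqP e1 /eqP e2]|/(_ c)]; last by rewrite !eqxx.
congr y; apply: val_inj; move: e1 e2.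
by case: (val c') (val c) => [a b] [a' b'] /= /ord_inj-> /ord_inj->.
Qed.

Lemma cell_value_out T y d i j : ~~ (lam i <= j < nu i)%N -> @cell_value T y d i j = d i j.
Proof.
move=> not_cell; rewrite /cell_value; case: pickP => [c /andP[/eqP ci /eqP cj]|//].
by have := valP c; rewrite /skew_cell ci cj (negbTE not_cell).
Qed.

Lemma cell_valueE T y d (e : nat -> nat -> T) :
  (forall c : PT, y c = e (val c).1 (val c).2) ->
  (forall i j, ~~ (lam i <= j < nu i)%N -> d i j = e i j) ->
  forall i j, cell_value y d i j = e i j.
Proof.
move=> y_e d_e i j; case: (boolP (lam i <= j < nu i)%N) => [/cell_at[c [<- <-]]|not_cell].
  by rewrite cell_value_cell.
by rewrite cell_value_out // d_e.
Qed.

Hypotheses (lam_part : is_partition lam) (nu_part : is_partition nu).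
Hypothesis lam_nu : subpart lam nu.

Section Upset.
Variable P : pred PT.
Hypothesis P_up : upward_closed (@skew_le m n lam nu) P.
Local Notation Y := (cell_value P (fun i j => lam i <= j)%N).

Lemma upset_value_lam i j : Y i j -> (lam i <= j)%N.
Proof. by case: (boolP (lam i <= j < nu i)%N) => [/andP[]|/cell_value_out->]. Qed.

Lemma upset_value_mono i j i' j' : (i <= i')%N -> (j <= j')%N -> Y i j -> Y i' j'.
Proof.
move=> le_i le_j Yij; have lam_j := upset_value_lam Yij.
case: (boolP (lam i' <= j' < nu i')%N) => [cell'|/cell_value_out->]; last first.
  exact: leq_trans (partition_antitone lam_part le_i) (leq_trans lam_j le_j).
have [c' [ci' cj']] := cell_at cell'; rewrite -ci' -cj' cell_value_cell.
case: (boolP (lam i <= j < nu i)%N) => [/cell_at[c [ci cj]]|not_cell].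
  move: Yij; rewrite -ci -cj cell_value_cell; apply: P_up.
  by rewrite /skew_le ci cj ci' cj' le_i le_j.
move: not_cell cell'; rewrite lam_j /= -leqNgt => le_nu_j /andP[_ lt_j'].
have := partition_antitone nu_part le_i; lia.
Qed.

Hypothesis n_gt0 : (0 < n)%N.

Definition upset_shape (i : nat) : nat := find (Y i) (iota 0 n).

Lemma leq_upset_shape i j : (upset_shape i <= j)%N = Y i j.
Proof.
apply: (find_iota_leq (k := nu i)) => [j1 j2 le_j||].
- exact: upset_value_mono (leqnn i) le_j.
- by rewrite (leq_ltn_trans (nu_box.1 i)) // ltn_predL.
- by rewrite cell_value_out ?lam_nu // ltnn andbF.
Qed.

Lemma upset_shape_partition : is_partition upset_shape.
Proof.
split=> [i|].
  rewrite leq_upset_shape; apply: (upset_value_mono (leqnSn i) (leqnn _)).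
  by rewrite -leq_upset_shape.
exists m => i le_m; apply/eqP; rewrite -leqn0 leq_upset_shape.
have nu_i : nu i = 0%N by apply: nu_box.2; rewrite (leq_trans (leq_pred m) le_m).
by rewrite cell_value_out ?nu_i ?andbF // -nu_i lam_nu.
Qed.

Lemma lam_sub_upset_shape : subpart lam upset_shape.
Proof. by move=> i; apply: upset_value_lam; rewrite -leq_upset_shape. Qed.

Lemma upset_shape_sub_nu : subpart upset_shape nu.
Proof. by move=> i; rewrite leq_upset_shape cell_value_out ?lam_nu // ltnn andbF. Qed.

Lemma corner_sum_upset_shape (R : realType) :
  corner_sum (@Mmu R m n upset_shape) = indicator P.
Proof.
rewrite corner_sum_Mmu; last exact: upset_shape_partition.1.
by apply: funext => c; rewrite /indicator /= leq_upset_shape cell_value_cell.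
Qed.

End Upset.

Section Inverse.
Variable R : realType.
Local Notation d := (fun i j => ((lam i <= j)%N%:R : R)).

Definition corner_diff (y : PT -> R) : 'I_m * 'I_n -> R :=
  fun rs => mixed_diff (shift0 (cell_value y d)) rs.1 rs.2.

Lemma corner_diff_affine : affine_morph corner_diff.
Proof.
move=> k w p sum_w; apply: funext => rs; rewrite /corner_diff /comb -mixed_diff_comb.
congr mixed_diff; apply: funext => i; apply: funext => j.
case: i j => [|i] [|j] /=; try by rewrite big1 // => t _; rewrite mulr0.
by rewrite /cell_value; case: pickP => // _; rewrite -mulr_suml sum_w mul1r.
Qed.

Lemma corner_diff_int y : integral_pt y -> integral_pt (corner_diff y).
Proof.
move=> y_int rs; have W_int i j : shift0 (cell_value y d) i j \is a Num.int.
  by case: i j => [|i] [|j] //=; rewrite /cell_value; case: pickP => *; rewrite ?natr_int.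
by rewrite /corner_diff /mixed_diff /col_diff !rpredB.
Qed.

Lemma corner_diff_Mmu mu : is_partition mu -> subpart lam mu -> subpart mu nu ->
  corner_diff (corner_sum (@Mmu R m n mu)) = @Mmu R m n mu.
Proof.
move=> mu_part lam_mu mu_nu; apply: funext => rs.
rewrite Mmu_mixed_diff; last exact: mu_part.1.
rewrite /corner_diff; congr mixed_diff; congr shift0; apply: funext => i; apply: funext => j.
apply: (cell_valueE (e := fun i j => (mu i <= j)%N%:R)) => [c|{}i {}j not_cell].
  by rewrite corner_sum_Mmu; last exact: mu_part.1.
suff -> : (lam i <= j)%N = (mu i <= j)%N by [].
by apply/idP/idP; move: (lam_mu i) (mu_nu i) not_cell; lia.
Qed.

End Inverse.
End Cells.

Arguments corner_diff {m n lam nu R}.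

Section Vertices.
Variables (R : realType) (m n : nat) (lam nu : nat -> nat).
Hypotheses (n_gt0 : (0 < n)%N) (lam_part : is_partition lam) (nu_part : is_partition nu).
Hypotheses (lam_nu : subpart lam nu) (nu_box : in_box n.-1 m.-1 nu).

Definition PASM_vertex (x : 'I_m * 'I_n -> R) : Prop :=
  exists mu, [/\ is_partition mu, subpart lam mu, subpart mu nu & x = @Mmu R m n mu].

Lemma order_polytope_skewE y :
  order_polytope (@skew_le m n lam nu) y <->
  conv (fun z => exists2 x, PASM_vertex x & corner_sum x = z) y.
Proof.
split=> [/order_polytope_conv_indicators|hull].
  apply: conv_sub => _ [P P_up ->]; exists (@Mmu R m n (upset_shape P)).
    exists (upset_shape P); split=> //.
    - exact: upset_shape_partition.
    - exact: lam_sub_upset_shape.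
    - exact: upset_shape_sub_nu.
  exact: corner_sum_upset_shape.
apply: order_polytope_convex; apply: conv_sub hull => _ [_ [mu [mu_part _ _ ->]] <-].
rewrite corner_sum_Mmu; last exact: mu_part.1.
apply: order_polytope_indicator => c c' /andP[le1 le2] /= le_mu.
exact: leq_trans (partition_antitone mu_part le1) (leq_trans le_mu le2).
Qed.

End Vertices.

Theorem theorem3 (R : realType) (m n : nat) (lam nu : nat -> nat) :
  (1 <= m)%N -> (1 <= n)%N ->
  is_partition lam -> is_partition nu ->
  subpart lam nu -> in_box n.-1 m.-1 nu ->
  integrally_equivalent (@PASM R m n lam nu)
                        (@order_polytope R _ (@skew_le m n lam nu)).
Proof.
move=> _ n_gt0 lam_part nu_part lam_nu nu_box.
apply: (integrally_equivalent_conv (f := corner_sum) (g := corner_diff)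
  (S := PASM_vertex lam nu)).
- exact: corner_sum_affine.
- exact: corner_diff_affine.
- by move=> _ [mu [mu_part lam_mu mu_nu ->]]; apply: corner_diff_Mmu.
- exact: order_polytope_skewE.
- exact: corner_sum_int.
- exact: corner_diff_int.
Qed.
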